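(* Let $X_0,Y_0$ be $\mathbb Z_+$-valued random variables with $\mathbf P(X_0=k)\ge\mathbf P(Y_0=k)$ for all integers $k\ge1$ and $\mathbf P(Y_0=0)>0$, coupled as in the $XY$-coupling described below, and let $\eta>0$. If $\mathbf E(X_0)<\infty$ and $\mathbf E(X_0-Y_0)\ge\eta\,\mathbf P(Y_0=0)$, then for all real $r\ge0$, all integers $n\ge0$, $k\ge0$ and all integers $\ell\in[0,\frac{r\eta}2]$, $$\mathbf E(X_{n+k+\ell})\ge\frac{m^{k+\ell}\eta}{2}\,\mathbf E\big[N_n^{(0)}\mathbf 1_{\{N_n^{(0)}\ge r\}}\mathbf 1_{\{Y_n=k\}}\big].$$
   Context: Fix an integer $m\ge2$. Reversed $m$-ary tree $\mathbb T$: vertices have generations $|x|\in\{0,1,2,\dots\}$; each vertex $x$ with $|x|\ge1$ has $m$ parents $x^{(1)},\dots,x^{(m)}$ in generation $|x|-1$, and each vertex has a unique child in the next generation. $XY$-coupling: couple $(X_0,Y_0)$ so that $X_0\ge Y_0$ a.s. and $\mathbf P(X_0=Y_0\mid Y_0>0)=1$ (possible under the hypotheses). Let $(X(x),Y(x))$, $|x|=0$, be i.i.d. copies of this pair, and for $|x|\ge1$ set $X(x):=(X(x^{(1)})+\cdots+X(x^{(m)})-1)^+$, $Y(x):=(Y(x^{(1)})+\cdots+Y(x^{(m)})-1)^+$. Then $X(x)\ge Y(x)$ for all $x$, and for $|x|=n$ the variables $X(x)$ (resp. $Y(x)$) have the law of the $n$-th term $X_n$ (resp. $Y_n$) of the recursive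 system $Z_{n+1}\overset{d}=(Z_{n,1}+\cdots+Z_{n,m}-1)^+$ started from $X_0$ (resp. $Y_0$). Open paths: a path leading to $x$ is $(x_0,\dots,x_{|x|}=x)$ with $|x_j|=j$ and $x_{j+1}$ the child of $x_j$; it is open if for every vertex $z$ on it with $|z|\ge1$, $Y(z^{(1)})+\cdots+Y(z^{(m)})\ge1$ (a path with $|x|=0$ is open). $N^{(i)}(x)$ is the number of open paths leading to $x$ with $Y(x_0)=i$. Let $\mathfrak e_n$ be a fixed vertex of generation $n$ (the first in lexicographic order, with $\mathfrak e_{n+1}$ the child of $\mathfrak e_n$), and set $N_n^{(0)}:=N^{(0)}(\mathfrak e_n)$, $Y_n:=Y(\mathfrak e_n)$, and $X_n:=X(\mathfrak e_n)$. *)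

From Stdlib Require Import Reals Arith.
Open Scope R_scope.

Fixpoint sum_nat (n : nat) (g : nat -> nat) : nat :=
  match n with O => O | S n' => (sum_nat n' g + g n')%nat end.

Fixpoint sum_R (n : nat) (g : nat -> R) : R :=
  match n with O => 0 | S n' => sum_R n' g + g n' end.

(* Value at a generation-n vertex of the reversed m-ary tree, whose m^n
   generation-0 ancestors carry the values v 0, ..., v (m^n - 1)
   (the ancestors through parent i occupy the block [i*m^(n-1), (i+1)*m^(n-1))).
   Recursion Z(x) = (Z(x^(1)) + ... + Z(x^(m)) - 1)^+ (nat truncated subtraction). *)
Fixpoint rec_val (m n : nat) (v : nat -> nat) : nat :=
  match n with
  | O => v O
  | S n' => (sum_nat m (fun i => rec_val m n' (fun j => v (i * Nat.pow m n' + j)%nat)) - 1)%nat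
  end.

(* N^{(0)} at a generation-n vertex: number of open paths leading to it that
   start at a generation-0 vertex with Y = 0, where y gives the Y-values of
   the generation-0 ancestors. *)
Fixpoint open_count (m n : nat) (y : nat -> nat) : nat :=
  match n with
  | O => if Nat.eqb (y O) O then 1%nat else 0%nat
  | S n' =>
      if Nat.leb 1 (sum_nat m (fun i => rec_val m n' (fun j => y (i * Nat.pow m n' + j)%nat)))
      then sum_nat m (fun i => open_count m n' (fun j => y (i * Nat.pow m n' + j)%nat))
      else 0%nat
  end.

(* q a b = P(X0 = a, Y0 = b): a probability mass function on nat*nat. *)
Definition is_pmf (q : nat -> nat -> R) : Prop :=
  (forall a b, 0 <= q a b) /\
  Un_cv (fun K => sum_R K (fun a => sum_R K (fun b => q a b))) 1.

(* XY-coupling: X0 >= Y0 a.s. and P(X0 = Y0 | Y0 > 0) = 1. *)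
Definition XY_coupling (q : nat -> nat -> R) : Prop :=
  forall a b, 0 < q a b -> (b <= a)%nat /\ ((0 < b)%nat -> a = b).

(* Truncated expectation of f(w) where w 0, ..., w (N-1) are i.i.d. copies of
   (X0,Y0) with law q, all values restricted to [0,K).  For nonnegative f
   (a.s.) this is nondecreasing in K and E f = sup_K texp q K N f. *)
Fixpoint texp (q : nat -> nat -> R) (K N : nat) (f : (nat -> nat * nat) -> R) : R :=
  match N with
  | O => f (fun _ => (O, O))
  | S N' => sum_R K (fun a => sum_R K (fun b =>
              q a b * texp q K N' (fun w => f (fun i => if Nat.eqb i N' then (a, b) else w i))))
  end.

(* E[f1(N1 iid copies)] <= E[f2(N2 iid copies)] in [0, +oo], for a.s.
   nonnegative f1, f2 (comparison of suprema of truncations). *)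
Definition exp_le (q : nat -> nat -> R) (N1 : nat) (f1 : (nat -> nat * nat) -> R)
  (N2 : nat) (f2 : (nat -> nat * nat) -> R) : Prop :=
  forall K, exists K', texp q K N1 f1 <= texp q K' N2 f2.

Definition indic (b : bool) : R := if b then 1 else 0.

(* Write W_n for the sum of X(x_0) over the leaves x_0 of e_n with Y(x_0) = 0
   whose path to e_n is open, and A = {N >= r, Y_n = k}.
   (1) Pointwise (section TreeBounds).  At every vertex X >= Y + W.  Over k
       more generations the excess X - Y of a vertex with Y >= k survives, and
       over l more generations a sum loses at most l per summand, so
         X_{n+k+l} >= sum_t 1{Y(t) = k} (W(t) - l)    (t ancestors in generation n),
       plus one unit when l >= 1 and two fixed ancestors t both contribute >= l.
   (2) The m^{k+l} summands depend on disjoint blocks of i.i.d. leaves, so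
       E X_{n+k+l} >= m^{k+l} E[1_A (W_n - l)] (+ the expected extra unit).
   (3) Under the XY-coupling X_0 1{Y_0 = 0} = X_0 - Y_0, and whether a leaf
       carries an open path ignores the leaf itself, so
       P(Y_0 = 0) E[1_A W_n] = E(X_0 - Y_0) E[1_A N] >= eta P(Y_0 = 0) E[1_A N].
   (4) On A, l <= r eta/2 <= N eta/2, hence E[1_A (W_n - l)] >= eta/2 E[1_A N].  At
   a finite level, (3) only holds up to factors tending to 1 (section Levels).
   For l = 0 step (4) costs nothing and a factor 1/2 may be lost; for l >= 1
   the positive expected extra unit of (1) pays for the loss (section Estimate). *)
From Stdlib Require Import Reals Arith Lia Lra Psatz FunctionalExtensionality.
Open Scope R_scope.

Lemma sum_R_ext n f g : (forall i, (i < n)%nat -> f i = g i) -> sum_R n f = sum_R n g.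
Proof.
  induction n as [|n IH]; intros H; simpl; auto.
  rewrite IH by (intros; apply H; lia). rewrite H by lia. reflexivity.
Qed.

Lemma sum_R_plus n f g : sum_R n (fun i => f i + g i) = sum_R n f + sum_R n g.
Proof. induction n as [|n IH]; simpl; [lra|]. rewrite IH. lra. Qed.

Lemma sum_R_scal n c f : sum_R n (fun i => c * f i) = c * sum_R n f.
Proof. induction n as [|n IH]; simpl; [lra|]. rewrite IH. lra. Qed.

Lemma sum_R_const n c : sum_R n (fun _ => c) = INR n * c.
Proof. induction n as [|n IH]; simpl sum_R; [simpl; lra|]. rewrite IH, S_INR. lra. Qed.

Lemma sum_R_le n f g : (forall i, (i < n)%nat -> f i <= g i) -> sum_R n f <= sum_R n g.
Proof.
  induction n as [|n IH]; intros H; simpl; [lra|].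
  apply Rplus_le_compat; [apply IH; intros; apply H|apply H]; lia.
Qed.

Lemma sum_R_nonneg n f : (forall i, (i < n)%nat -> 0 <= f i) -> 0 <= sum_R n f.
Proof.
  intros H. rewrite <- (Rmult_0_r (INR n)), <- sum_R_const.
  apply sum_R_le; exact H.
Qed.

Lemma sum_R_le_length n n' f :
  (n <= n')%nat -> (forall i, 0 <= f i) -> sum_R n f <= sum_R n' f.
Proof. intros Hn Hf. induction Hn; simpl; [lra|]. pose proof (Hf m). lra. Qed.

Lemma sum_R_term_le n f i :
  (i < n)%nat -> (forall j, (j < n)%nat -> 0 <= f j) -> f i <= sum_R n f.
Proof.
  induction n as [|n IH]; intros Hi Hf; [lia|]. simpl.
  destruct (Nat.eq_dec i n) as [->|Hne].
  - assert (0 <= sum_R n f) by (apply sum_R_nonneg; intros; apply Hf; lia). lra.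
  - assert (f i <= sum_R n f) by (apply IH; [lia|intros; apply Hf; lia]).
    pose proof (Hf n ltac:(lia)). lra.
Qed.

Lemma sum_R_pos_term n f : 0 < sum_R n f -> exists i, (i < n)%nat /\ 0 < f i.
Proof.
  induction n as [|n IH]; simpl; intros H; [lra|].
  destruct (Rlt_dec 0 (f n)) as [Hf|Hf].
  - exists n; auto.
  - destruct IH as [i [Hi Hi']]; [lra|]. exists i; auto.
Qed.

(** * Truncated expectations *)

Definition upd (i : nat) (p : nat * nat) (w : nat -> nat * nat) : nat -> nat * nat :=
  fun j => if Nat.eqb j i then p else w j.

Definition glue (N1 : nat) (w u : nat -> nat * nat) : nat -> nat * nat :=
  fun i => if Nat.ltb i N1 then w i else u (i - N1)%nat.

Definition loc (M : nat) (g : (nat -> nat * nat) -> R) : Prop :=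
  forall u u', (forall j, (j < M)%nat -> u j = u' j) -> g u = g u'.

Section Truncation.
Variable q : nat -> nat -> R.
Hypothesis q_nonneg : forall a b, 0 <= q a b.

Definition mass K := texp q K 1 (fun _ => 1).

Lemma texp_S K N f : texp q K (S N) f =
  sum_R K (fun a => sum_R K (fun b => q a b * texp q K N (fun w => f (upd N (a, b) w)))).
Proof. reflexivity. Qed.

Lemma texp1 K h :
  texp q K 1 (fun w => h (w 0%nat)) = sum_R K (fun a => sum_R K (fun b => q a b * h (a, b))).
Proof. reflexivity. Qed.

Lemma texp_ext K N f g : (forall w, f w = g w) -> texp q K N f = texp q K N g.
Proof. intros H. f_equal. apply functional_extensionality; exact H. Qed.

Lemma texp_plus K N f g : texp q K N (fun w => f w + g w) = texp q K N f + texp q K N g.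
Proof.
  revert f g; induction N as [|N IH]; intros; simpl; auto.
  rewrite <- sum_R_plus. apply sum_R_ext; intros.
  rewrite <- sum_R_plus. apply sum_R_ext; intros.
  rewrite IH. lra.
Qed.

Lemma texp_scal K N c f : texp q K N (fun w => c * f w) = c * texp q K N f.
Proof.
  revert f; induction N as [|N IH]; intros; simpl; auto.
  rewrite <- sum_R_scal. apply sum_R_ext; intros.
  rewrite <- sum_R_scal. apply sum_R_ext; intros.
  rewrite IH. lra.
Qed.

Lemma texp_zero K N : texp q K N (fun _ => 0) = 0.
Proof. rewrite (texp_ext _ _ _ (fun w => 0 * 0)) by (intros; lra). rewrite texp_scal. lra. Qed.

Lemma texp_minus K N f g : texp q K N (fun w => f w - g w) = texp q K N f - texp q K N g.
Proof.
  rewrite (texp_ext _ _ _ (fun w => f w + (-1) * g w)) by (intros; lra).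
  rewrite texp_plus, texp_scal. lra.
Qed.

Lemma texp_sum K N B (F : nat -> (nat -> nat * nat) -> R) :
  texp q K N (fun w => sum_R B (fun t => F t w)) = sum_R B (fun t => texp q K N (F t)).
Proof. induction B as [|B IH]; simpl; [apply texp_zero|]. rewrite texp_plus, IH. auto. Qed.

Lemma texp_mono_supp K N f g :
  (forall w, (forall i, (i < N)%nat -> 0 < q (fst (w i)) (snd (w i))) -> f w <= g w) ->
  texp q K N f <= texp q K N g.
Proof.
  revert f g; induction N as [|N IH]; intros f g H; simpl.
  - apply H; intros; lia.
  - apply sum_R_le; intros a _. apply sum_R_le; intros b _.
    destruct (q_nonneg a b) as [Hq|Hq]; [|rewrite <- Hq; lra].
    apply Rmult_le_compat_l; [lra|]. apply IH. intros w Hw. apply H.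
    intros i Hi. unfold upd. destruct (Nat.eqb_spec i N); simpl; auto. apply Hw; lia.
Qed.

Lemma texp_mono K N f g : (forall w, f w <= g w) -> texp q K N f <= texp q K N g.
Proof. intros; apply texp_mono_supp; auto. Qed.

Lemma texp_nonneg K N f : (forall w, 0 <= f w) -> 0 <= texp q K N f.
Proof. intros H. rewrite <- (texp_zero K N). apply texp_mono; auto. Qed.

Lemma texp_level_mono K K' N f :
  (K <= K')%nat -> (forall w, 0 <= f w) -> texp q K N f <= texp q K' N f.
Proof.
  revert f; induction N as [|N IH]; intros f HK Hf; simpl; [lra|].
  assert (Hterm : forall K0 a b, 0 <= q a b * texp q K0 N (fun w => f (upd N (a, b) w)))
    by (intros; apply Rmult_le_pos; auto; apply texp_nonneg; auto).
  apply Rle_trans with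
    (sum_R K' (fun a => sum_R K (fun b => q a b * texp q K N (fun w => f (upd N (a, b) w))))).
  - apply sum_R_le_length; auto. intros. apply sum_R_nonneg; auto.
  - apply sum_R_le; intros a _.
    apply Rle_trans with (sum_R K' (fun b => q a b * texp q K N (fun w => f (upd N (a, b) w)))).
    + apply sum_R_le_length; auto.
    + apply sum_R_le; intros. apply Rmult_le_compat_l; auto.
Qed.

Lemma texp_const K N c : texp q K N (fun _ => c) = mass K ^ N * c.
Proof.
  induction N as [|N IH]; [simpl; lra|]. rewrite texp_S.
  transitivity (sum_R K (fun a => sum_R K (fun b => q a b * 1)) * (mass K ^ N * c)).
  - rewrite Rmult_comm, <- sum_R_scal. apply sum_R_ext; intros.
    rewrite <- sum_R_scal. apply sum_R_ext; intros. rewrite IH. lra.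
  - unfold mass. simpl. lra.
Qed.

Lemma texp_pos K N f g :
  0 < texp q K N f -> (forall w, 0 < f w -> 0 < g w) -> (forall w, 0 <= g w) ->
  0 < texp q K N g.
Proof.
  revert f g; induction N as [|N IH]; intros f g Hf Hfg Hg; [simpl in *; auto|].
  rewrite texp_S in Hf |- *.
  apply sum_R_pos_term in Hf as [a [Ha Hf]]. apply sum_R_pos_term in Hf as [b [Hb Hf]].
  assert (Hab : 0 < q a b /\ 0 < texp q K N (fun w => f (upd N (a, b) w))).
  { destruct (q_nonneg a b) as [Hq|Hq]; [|rewrite <- Hq in Hf; lra].
    split; auto. destruct (Rlt_dec 0 (texp q K N (fun w => f (upd N (a, b) w)))); auto. nra. }
  destruct Hab as [Hq Ht].
  assert (Hg' : 0 < texp q K N (fun w => g (upd N (a, b) w))) by (eapply IH; eauto).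
  assert (Hterm : forall a' b', 0 <= q a' b' * texp q K N (fun w => g (upd N (a', b') w)))
    by (intros; apply Rmult_le_pos; auto; apply texp_nonneg; auto).
  eapply Rlt_le_trans; [|apply (sum_R_term_le _ _ a); auto].
  - eapply Rlt_le_trans; [|apply (sum_R_term_le _ _ b); auto]. nra.
  - intros; apply sum_R_nonneg; auto.
Qed.

(* Coordinates beyond N are never sampled. *)
Lemma texp_local K N f g :
  (forall w, (forall i, (N <= i)%nat -> w i = (0, 0)%nat) -> f w = g w) ->
  texp q K N f = texp q K N g.
Proof.
  revert f g; induction N as [|N IH]; intros f g H; simpl.
  - apply H; auto.
  - apply sum_R_ext; intros. apply sum_R_ext; intros. f_equal. apply IH.
    intros w Hw. apply H. intros j Hj. unfold upd.
    destruct (Nat.eqb_spec j N); [lia|]. apply Hw; lia.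
Qed.

Lemma texp_split K N1 N2 f :
  texp q K (N1 + N2) f = texp q K N2 (fun u => texp q K N1 (fun w => f (glue N1 w u))).
Proof.
  revert f; induction N2 as [|N2 IH]; intros f.
  - rewrite Nat.add_0_r. simpl. apply texp_local. intros w Hw. f_equal.
    apply functional_extensionality; intros i. unfold glue.
    destruct (Nat.ltb_spec i N1); auto.
  - rewrite Nat.add_succ_r, !texp_S. apply sum_R_ext; intros a _. apply sum_R_ext; intros b _.
    f_equal. rewrite IH. apply texp_ext; intros u. apply texp_ext; intros w. f_equal.
    apply functional_extensionality; intros i. unfold upd, glue.
    destruct (Nat.ltb_spec i N1); destruct (Nat.eqb_spec i (N1 + N2));
      destruct (Nat.eqb_spec (i - N1) N2); auto; lia.
Qed.

Lemma texp_block K N M s g : (s + M <= N)%nat -> loc M g ->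
  texp q K N (fun w => g (fun j => w (s + j)%nat)) = mass K ^ (N - M) * texp q K M g.
Proof.
  intros Hs Hg.
  replace N with ((s + M) + (N - s - M))%nat at 1 by lia. rewrite texp_split.
  rewrite (texp_ext _ _ _ (fun _ => texp q K (s + M) (fun w => g (fun j => w (s + j)%nat)))).
  2:{ intros u. apply texp_ext; intros w. apply Hg. intros j Hj.
      unfold glue. destruct (Nat.ltb_spec (s + j) (s + M)); auto; lia. }
  rewrite texp_const, texp_split.
  rewrite (texp_ext _ _ _ (fun u => mass K ^ s * g u)).
  2:{ intros u. rewrite <- texp_const. apply texp_ext; intros w. f_equal.
      apply functional_extensionality; intros j. unfold glue.
      destruct (Nat.ltb_spec (s + j) s); [lia|]. f_equal. lia. }
  rewrite texp_scal, <- Rmult_assoc, <- pow_add.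
  replace (N - s - M + s)%nat with (N - M)%nat by lia. reflexivity.
Qed.

Lemma texp_block2 K N M1 M2 s1 s2 g1 g2 :
  (s1 + M1 <= s2)%nat -> (s2 + M2 <= N)%nat -> loc M1 g1 -> loc M2 g2 ->
  texp q K N (fun w => g1 (fun j => w (s1 + j)%nat) * g2 (fun j => w (s2 + j)%nat))
  = mass K ^ (N - M1 - M2) * texp q K M1 g1 * texp q K M2 g2.
Proof.
  intros H1 H2 Hg1 Hg2.
  replace N with (s2 + (N - s2))%nat at 1 by lia. rewrite texp_split.
  rewrite (texp_ext _ _ _ (fun u => (mass K ^ (s2 - M1) * texp q K M1 g1) * g2 (fun j => u (0 + j)%nat))).
  2:{ intros u. rewrite <- (texp_block K s2 M1 s1 g1) by (auto; lia).
      rewrite Rmult_comm, <- texp_scal. apply texp_ext; intros w.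
      assert (E1 : g1 (fun j => glue s2 w u (s1 + j)%nat) = g1 (fun j => w (s1 + j)%nat)).
      { apply Hg1. intros j Hj. unfold glue. destruct (Nat.ltb_spec (s1 + j) s2); auto; lia. }
      assert (E2 : (fun j => glue s2 w u (s2 + j)%nat) = (fun j => u (0 + j)%nat)).
      { apply functional_extensionality; intros j. unfold glue.
        destruct (Nat.ltb_spec (s2 + j) s2); [lia|]. f_equal. lia. }
      rewrite E1, E2. ring. }
  rewrite texp_scal, (texp_block K (N - s2) M2 0 g2) by (auto; lia).
  replace (N - M1 - M2)%nat with ((s2 - M1) + (N - s2 - M2))%nat by lia.
  rewrite pow_add. ring.
Qed.

Lemma upd_upd_same i p p' (w : nat -> nat * nat) : upd i p (upd i p' w) = upd i p w.
Proof. apply functional_extensionality; intros j. unfold upd. destruct (Nat.eqb j i); auto. Qed.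

Lemma upd_comm i j p p' (w : nat -> nat * nat) : i <> j -> upd i p (upd j p' w) = upd j p' (upd i p w).
Proof.
  intros Hij. apply functional_extensionality; intros t. unfold upd.
  destruct (Nat.eqb_spec t i); destruct (Nat.eqb_spec t j); auto; lia.
Qed.

(* Independence of one coordinate from a functional F that ignores it:
   E[h(w_i) F(w)] E[1] = E[h(w_0)] E[F(w)] (the mass factor normalises the
   truncated, not necessarily probability, weights). *)
Lemma texp_indep_coord K N i h F : (i < N)%nat ->
  (forall w p, F (upd i p w) = F w) ->
  texp q K N (fun w => h (w i) * F w) * mass K = texp q K 1 (fun w => h (w 0%nat)) * texp q K N F.
Proof.
  revert F; induction N as [|N IH]; intros F Hi HF; [lia|].
  unfold mass. rewrite texp1, !(texp_S K N).
  change (texp q K 1 (fun _ => 1)) with (sum_R K (fun a => sum_R K (fun b => q a b * 1))).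
  destruct (Nat.eq_dec i N) as [->|Hne].
  - rewrite (sum_R_ext _ _ (fun a => texp q K N F * sum_R K (fun b => q a b * h (a, b)))).
    2:{ intros a _. rewrite <- sum_R_scal. apply sum_R_ext; intros b _.
        rewrite (texp_ext _ _ _ (fun w => h (a, b) * F w)), texp_scal; [ring|].
        intros w. unfold upd at 1. rewrite Nat.eqb_refl, HF. reflexivity. }
    rewrite (sum_R_ext _ (fun a => sum_R K (fun b => q a b * texp q K N (fun w => F (upd N (a, b) w))))
                         (fun a => texp q K N F * sum_R K (fun b => q a b * 1))).
    2:{ intros a _. rewrite <- sum_R_scal. apply sum_R_ext; intros b _.
        rewrite (texp_ext _ _ _ F) by (intros; apply HF). ring. }
    rewrite !sum_R_scal. ring.
  - rewrite Rmult_comm, <- sum_R_scal, <- sum_R_scal. apply sum_R_ext; intros a _.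
    rewrite <- !sum_R_scal. apply sum_R_ext; intros b _.
    set (Fab := fun w => F (upd N (a, b) w)).
    assert (HFab : forall w p, Fab (upd i p w) = Fab w).
    { intros w p. unfold Fab. rewrite upd_comm by lia. apply HF. }
    pose proof (IH Fab ltac:(lia) HFab) as IHab. unfold mass in IHab.
    change (texp q K 1 (fun _ => 1)) with (sum_R K (fun a => sum_R K (fun b => q a b * 1))) in IHab.
    rewrite texp1 in IHab.
    rewrite (texp_ext _ _ _ (fun w => h (w i) * Fab w)).
    2:{ intros w. unfold Fab, upd at 1. destruct (Nat.eqb_spec i N); [lia|]. reflexivity. }
    transitivity (q a b * (texp q K N (fun w => h (w i) * Fab w) *
                           sum_R K (fun a0 => sum_R K (fun b0 => q a0 b0 * 1)))); [ring|].
    rewrite IHab. ring.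
Qed.

Lemma mass_nonneg K : 0 <= mass K.
Proof. apply texp_nonneg; intros; lra. Qed.

Lemma mass_mono K K' : (K <= K')%nat -> mass K <= mass K'.
Proof. intros; apply texp_level_mono; auto; intros; lra. Qed.

End Truncation.

Open Scope nat_scope.

Lemma sum_nat_ext n (f g : nat -> nat) : (forall i, i < n -> f i = g i) -> sum_nat n f = sum_nat n g.
Proof.
  induction n as [|n IH]; intros H; simpl; auto.
  rewrite IH by (intros; apply H; lia). rewrite H by lia. reflexivity.
Qed.

Lemma sum_nat_le n (f g : nat -> nat) : (forall i, i < n -> f i <= g i) -> sum_nat n f <= sum_nat n g.
Proof.
  induction n as [|n IH]; intros H; simpl; auto.
  pose proof (H n ltac:(lia)). enough (sum_nat n f <= sum_nat n g) by lia.
  apply IH; intros; apply H; lia.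
Qed.

Lemma sum_nat_term_le n (f : nat -> nat) i : i < n -> f i <= sum_nat n f.
Proof.
  induction n as [|n IH]; intros Hi; simpl; [lia|].
  destruct (Nat.eq_dec i n) as [->|Hne]; [lia|]. pose proof (IH ltac:(lia)); lia.
Qed.

Lemma sum_nat_plus n (f g : nat -> nat) : sum_nat n (fun i => f i + g i) = sum_nat n f + sum_nat n g.
Proof. induction n as [|n IH]; simpl; auto. rewrite IH; lia. Qed.

Lemma sum_nat_zero n (f : nat -> nat) : (forall i, i < n -> f i = 0) -> sum_nat n f = 0.
Proof.
  induction n as [|n IH]; intros H; simpl; auto.
  rewrite IH by (intros; apply H; lia). rewrite H by lia. reflexivity.
Qed.

Lemma sum_nat_add A B (g : nat -> nat) :
  sum_nat (A + B) g = sum_nat A g + sum_nat B (fun s => g (A + s)).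
Proof.
  induction B as [|B IH]; simpl; [rewrite Nat.add_0_r; lia|].
  rewrite Nat.add_succ_r. simpl. rewrite IH. lia.
Qed.

Lemma sum_nat_blocks A B (g : nat -> nat) :
  sum_nat (A * B) g = sum_nat A (fun j => sum_nat B (fun s => g (j * B + s))).
Proof. induction A as [|A IH]; simpl; auto. rewrite Nat.add_comm, sum_nat_add, IH. lia. Qed.

Lemma sum_nat_sub_le n (c : nat -> nat) d : sum_nat n (fun i => c i - d) <= sum_nat n c - d.
Proof. induction n; simpl; lia. Qed.

(** * Deterministic bounds on the recursive system along the tree

   A generation-n vertex has m^n leaves; those below its parent j < m form
   the block [j m^(n-1), (j+1) m^(n-1)).  [rec_val m n v] is the value at
   the vertex, and [open_from n y i] indicates that leaf i has y i = 0 and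
   that the path from it is open, so that open_count is their sum. *)

Definition blk (M j : nat) (v : nat -> nat) : nat -> nat := fun s => v (j * M + s).

Section TreeBounds.
Variable m : nat.
Hypothesis m_pos : 0 < m.

Lemma pow_m_pos n : 0 < Nat.pow m n.
Proof. induction n; simpl; lia. Qed.

Lemma blk_index_lt M j s : j < m -> s < M -> j * M + s < m * M.
Proof. intros; nia. Qed.

Lemma blk_index_divmod M j s : s < M -> (j * M + s) / M = j /\ (j * M + s) mod M = s.
Proof.
  intros Hs. split.
  - rewrite Nat.div_add_l, Nat.div_small by lia. lia.
  - rewrite Nat.add_comm, Nat.Div0.mod_add. apply Nat.mod_small; lia.
Qed.

Lemma rec_val_ext n v v' :
  (forall i, i < Nat.pow m n -> v i = v' i) -> rec_val m n v = rec_val m n v'.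
Proof.
  revert v v'; induction n as [|n IH]; intros v v' H; simpl.
  - apply H. simpl; lia.
  - f_equal. apply sum_nat_ext. intros j Hj. apply IH. intros s Hs.
    apply H. apply blk_index_lt; auto.
Qed.

Lemma rec_val_compose j L v :
  rec_val m (j + L) v = rec_val m j (fun t => rec_val m L (blk (Nat.pow m L) t v)).
Proof.
  revert v; induction j as [|j IH]; intros v; simpl; auto.
  f_equal. apply sum_nat_ext. intros i Hi. rewrite IH. unfold blk. f_equal.
  apply functional_extensionality; intros t. f_equal.
  apply functional_extensionality; intros s. f_equal. rewrite Nat.pow_add_r. nia.
Qed.

Lemma rec_val_ge_leaf j b t : t < Nat.pow m j -> b t - j <= rec_val m j b.
Proof.
  revert b t; induction j as [|j IH]; intros b t Ht; simpl in *; [replace t with 0 by lia; lia|].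
  set (M := Nat.pow m j) in *. pose proof (pow_m_pos j) as HM.
  pose proof (Nat.div_mod t M ltac:(lia)) as Hd.
  assert (Hs : t mod M < M) by (apply Nat.mod_upper_bound; lia).
  assert (Hi : t / M < m) by (apply Nat.Div0.div_lt_upper_bound; nia).
  pose proof (IH (fun s => b (t / M * M + s)) (t mod M) Hs) as H1. simpl in H1.
  replace (t / M * M + t mod M) with t in H1 by lia.
  pose proof (sum_nat_term_le m (fun i => rec_val m j (fun s => b (i * M + s))) (t / M) Hi).
  simpl in *. lia.
Qed.

(* Excess transport: if b <= a at the leaves then, j generations later, the
   a-value dominates the b-value plus the excess a - b of every leaf whose
   b-value is at least j (such a leaf keeps b >= 1 along its whole path, so
   no "-1" is ever paid for the excess). *)
Lemma rec_val_excess j a b : (forall t, t < Nat.pow m j -> b t <= a t) ->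
  rec_val m j b + sum_nat (Nat.pow m j) (fun t => if j <=? b t then a t - b t else 0)
  <= rec_val m j a.
Proof.
  revert a b; induction j as [|j IH]; intros a b H; simpl.
  - pose proof (H 0 ltac:(simpl; lia)). lia.
  - set (M := Nat.pow m j). pose proof (pow_m_pos j) as HM.
    rewrite sum_nat_blocks.
    set (A := fun i => rec_val m j (fun s => a (i * M + s))).
    set (B := fun i => rec_val m j (fun s => b (i * M + s))).
    set (T := fun i => sum_nat M (fun s => if S j <=? b (i * M + s) then a (i * M + s) - b (i * M + s) else 0)).
    assert (Hblock : forall i, i < m -> B i + T i <= A i).
    { intros i Hi.
      pose proof (IH (fun s => a (i * M + s)) (fun s => b (i * M + s))) as Hi'.
      unfold A, B, T. eapply Nat.le_trans; [|apply Hi'].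
      - apply Nat.add_le_mono_l, sum_nat_le. intros s _.
        destruct (Nat.leb_spec (S j) (b (i * M + s))), (Nat.leb_spec j (b (i * M + s))); lia.
      - intros t Ht. apply H. apply blk_index_lt; auto. }
    assert (Hsum : sum_nat m B + sum_nat m T <= sum_nat m A).
    { rewrite <- sum_nat_plus. apply sum_nat_le. exact Hblock. }
    (* a positive excess forces a positive b-value at the parent *)
    assert (Hexcess : sum_nat m B = 0 -> sum_nat m T = 0).
    { intros HB. apply sum_nat_zero. intros i Hi. apply sum_nat_zero. intros s Hs.
      destruct (Nat.leb_spec (S j) (b (i * M + s))); auto.
      pose proof (rec_val_ge_leaf j (fun s0 => b (i * M + s0)) s Hs).
      pose proof (sum_nat_term_le m B i Hi). unfold B in *. simpl in *. lia. }
    change (sum_nat m B - 1 + sum_nat m T <= sum_nat m A - 1).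
    destruct (sum_nat m B) eqn:E; [rewrite Hexcess by auto|]; lia.
Qed.

(* [open_from n y i] = 1 iff leaf i has y = 0 and every vertex on its path
   to the generation-n vertex has a parent sum of y-values at least 1. *)
Fixpoint open_from (n : nat) (y : nat -> nat) (i : nat) : nat :=
  match n with
  | O => if Nat.eqb (y O) O then 1 else 0
  | S n' => if Nat.leb 1 (sum_nat m (fun j => rec_val m n' (fun s => y (j * Nat.pow m n' + s))))
            then open_from n' (fun s => y (i / Nat.pow m n' * Nat.pow m n' + s)) (i mod Nat.pow m n')
            else 0
  end.

Lemma open_count_sum n y : open_count m n y = sum_nat (Nat.pow m n) (open_from n y).
Proof.
  revert y; induction n as [|n IH]; intros y; simpl; auto.
  set (M := Nat.pow m n).
  destruct (sum_nat m (fun j => rec_val m n (fun s => y (j * M + s)))).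
  { symmetry; apply sum_nat_zero; auto. }
  rewrite sum_nat_blocks. apply sum_nat_ext. intros j Hj.
  rewrite IH. apply sum_nat_ext. intros s Hs.
  destruct (blk_index_divmod M j s Hs) as [-> ->]. reflexivity.
Qed.

Lemma open_from_nonzero_leaf n y i : i < Nat.pow m n -> y i <> 0 -> open_from n y i = 0.
Proof.
  revert y i; induction n as [|n IH]; intros y i Hi Hy; simpl in *.
  - replace i with 0 in Hy by lia. destruct (Nat.eqb_spec (y 0) 0); auto; lia.
  - set (M := Nat.pow m n) in *. pose proof (pow_m_pos n) as HM.
    destruct (sum_nat m (fun j => rec_val m n (fun s => y (j * M + s)))); auto.
    apply IH; [apply Nat.mod_upper_bound; lia|].
    rewrite (Nat.mul_comm (i / M) M), <- Nat.div_mod_eq. auto.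
Qed.

Lemma open_from_ext n y y' i : i < Nat.pow m n ->
  (forall s, s < Nat.pow m n -> y s = y' s) -> open_from n y i = open_from n y' i.
Proof.
  revert y y' i; induction n as [|n IH]; intros y y' i Hi H; simpl in *.
  - rewrite H by lia. auto.
  - set (M := Nat.pow m n) in *. pose proof (pow_m_pos n) as HM.
    replace (sum_nat m (fun j => rec_val m n (fun s => y (j * M + s))))
      with (sum_nat m (fun j => rec_val m n (fun s => y' (j * M + s)))).
    2:{ apply sum_nat_ext. intros j Hj. apply rec_val_ext. intros s Hs.
        symmetry. apply H, blk_index_lt; auto. }
    destruct (sum_nat m (fun j => rec_val m n (fun s => y' (j * M + s)))); auto.
    apply IH; [apply Nat.mod_upper_bound; lia|].
    intros s Hs. apply H, blk_index_lt; auto. apply Nat.Div0.div_lt_upper_bound; nia.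
Qed.

Lemma open_count_ext n y y' :
  (forall s, s < Nat.pow m n -> y s = y' s) -> open_count m n y = open_count m n y'.
Proof. intros H. rewrite !open_count_sum. apply sum_nat_ext. intros; apply open_from_ext; auto. Qed.

Definition open_weight (n : nat) (x y : nat -> nat) : nat :=
  sum_nat (Nat.pow m n) (fun i => x i * open_from n y i).

(* X >= Y + W: along an open path the y-recursion never truncates, so the
   x-value of the leaf is passed on without loss on top of the y-value. *)
Lemma rec_val_ge_open_weight n x y : (forall i, i < Nat.pow m n -> y i <= x i) ->
  rec_val m n y + open_weight n x y <= rec_val m n x.
Proof.
  unfold open_weight. revert x y; induction n as [|n IH]; intros x y H; simpl.
  - pose proof (H 0 ltac:(simpl; lia)). destruct (Nat.eqb_spec (y 0) 0); lia.
  - set (M := Nat.pow m n). rewrite sum_nat_blocks.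
    set (A := fun i => rec_val m n (fun s => x (i * M + s))).
    set (B := fun i => rec_val m n (fun s => y (i * M + s))).
    set (W := fun i => sum_nat M (fun s => x (i * M + s) * open_from n (fun s0 => y (i * M + s0)) s)).
    assert (E : sum_nat m (fun j => sum_nat M (fun s => x (j * M + s) *
         (if 1 <=? sum_nat m B
          then open_from n (fun s0 => y ((j * M + s) / M * M + s0)) ((j * M + s) mod M) else 0)))
         = if 1 <=? sum_nat m B then sum_nat m W else 0).
    { destruct (1 <=? sum_nat m B).
      - apply sum_nat_ext. intros j Hj. apply sum_nat_ext. intros s Hs.
        destruct (blk_index_divmod M j s Hs) as [-> ->]. reflexivity.
      - apply sum_nat_zero. intros. apply sum_nat_zero. intros. lia. }
    change (sum_nat m B - 1 + sum_nat m (fun j => sum_nat M (fun s => x (j * M + s) *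
         (if 1 <=? sum_nat m B
          then open_from n (fun s0 => y ((j * M + s) / M * M + s0)) ((j * M + s) mod M) else 0)))
         <= sum_nat m A - 1).
    rewrite E.
    assert (Hsum : sum_nat m B + sum_nat m W <= sum_nat m A).
    { rewrite <- sum_nat_plus. apply sum_nat_le. intros i Hi.
      apply (IH (fun s => x (i * M + s)) (fun s => y (i * M + s))).
      intros t Ht. apply H, blk_index_lt; auto. }
    destruct (Nat.leb_spec 1 (sum_nat m B)); lia.
Qed.

Lemma rec_val_ge_sum_minus l v : sum_nat (Nat.pow m l) (fun s => v s - l) <= rec_val m l v.
Proof.
  revert v; induction l as [|l IH]; intros v; simpl; [lia|].
  set (M := Nat.pow m l). rewrite sum_nat_blocks.
  eapply Nat.le_trans; [|apply sum_nat_sub_le]. apply sum_nat_le. intros i Hi.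
  eapply Nat.le_trans; [|apply Nat.sub_le_mono_r, (IH (fun s => v (i * M + s)))].
  eapply Nat.le_trans; [|apply sum_nat_sub_le]. apply sum_nat_le. intros. lia.
Qed.

(* One extra unit, when l >= 1 and the leaves 0 and m^(l-1) -- which lie in
   different subtrees of the root -- both satisfy c. *)
Definition pair_bonus (l : nat) (c : nat -> bool) : nat :=
  match l with O => 0 | S l' => if andb (c 0) (c (Nat.pow m l')) then 1 else 0 end.

(* When two of at least two summands are positive, the final "-1" of the
   recursion is paid by them. *)
Lemma sum_nat_sub1_bonus (R : nat -> nat) mm : 2 <= mm ->
  sum_nat mm (fun i => R i - 1) + (if andb (1 <=? R 0) (1 <=? R 1) then 1 else 0)
  <= sum_nat mm R - 1.
Proof.
  intros Hmm. induction Hmm.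
  - simpl. destruct (R 0), (R 1); simpl; lia.
  - revert IHHmm. generalize (if andb (1 <=? R 0) (1 <=? R 1) then 1 else 0). intros c IH. simpl. lia.
Qed.

Lemma rec_val_ge_sum_minus_bonus l v : 2 <= m ->
  sum_nat (Nat.pow m l) (fun s => v s - l) + pair_bonus l (fun s => l <=? v s) <= rec_val m l v.
Proof.
  intros Hm2. destruct l as [|l]; [pose proof (rec_val_ge_sum_minus 0 v); simpl in *; lia|].
  simpl rec_val. set (M := Nat.pow m l). pose proof (pow_m_pos l) as HM.
  set (R := fun i => rec_val m l (fun s => v (i * M + s))).
  assert (Hblocks : sum_nat (Nat.pow m (S l)) (fun s => v s - S l) <= sum_nat m (fun i => R i - 1)).
  { simpl. rewrite sum_nat_blocks. apply sum_nat_le. intros i _.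
    eapply Nat.le_trans; [|apply Nat.sub_le_mono_r, (rec_val_ge_sum_minus l (fun s => v (i * M + s)))].
    eapply Nat.le_trans; [|apply sum_nat_sub_le]. apply sum_nat_le. intros. unfold M; lia. }
  assert (Hpair : pair_bonus (S l) (fun s => S l <=? v s)
                  <= (if andb (1 <=? R 0) (1 <=? R 1) then 1 else 0)).
  { assert (R0 : v 0 - l <= R 0).
    { pose proof (rec_val_ge_leaf l (fun s => v (0 * M + s)) 0 HM) as X. exact X. }
    assert (R1 : v M - l <= R 1).
    { pose proof (rec_val_ge_leaf l (fun s => v (1 * M + s)) 0 HM) as X.
      cbv beta in X. replace (1 * M + 0) with M in X by lia. exact X. }
    unfold pair_bonus. fold M.
    destruct (Nat.leb_spec (S l) (v 0)), (Nat.leb_spec (S l) (v M)),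
      (Nat.leb_spec 1 (R 0)), (Nat.leb_spec 1 (R 1)); simpl; lia. }
  pose proof (sum_nat_sub1_bonus R m Hm2). lia.
Qed.

(* k generations above generation n: a vertex with y-value exactly k keeps its
   open weight (X - Y >= W), and the excess survives the k generations. *)
Lemma excess_after_k k l z u W : (forall t, t < Nat.pow m k -> z t + W t <= u t) ->
  sum_nat (Nat.pow m k) (fun t => if z t =? k then W t - l else 0) <= rec_val m k u - l
  /\ (andb (z 0 =? k) (l <=? W 0) = true -> l <= rec_val m k u).
Proof.
  intros HzW. pose proof (pow_m_pos k) as HK.
  set (excess := fun t => if k <=? z t then u t - z t else 0).
  assert (Hexc : sum_nat (Nat.pow m k) excess <= rec_val m k u).
  { pose proof (rec_val_excess k u z) as X. unfold excess.
    enough (rec_val m k z + sum_nat (Nat.pow m k) (fun t => if k <=? z t then u t - z t else 0)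
            <= rec_val m k u) by lia.
    apply X. intros t Ht. pose proof (HzW t Ht). lia. }
  assert (Hterm : forall t, t < Nat.pow m k -> z t = k -> W t <= excess t).
  { intros t Ht Hz. pose proof (HzW t Ht). unfold excess. rewrite Hz, Nat.leb_refl. lia. }
  split.
  - eapply Nat.le_trans; [|apply Nat.sub_le_mono_r, Hexc].
    eapply Nat.le_trans; [|apply sum_nat_sub_le]. apply sum_nat_le. intros t Ht.
    destruct (Nat.eqb_spec (z t) k); [pose proof (Hterm t Ht e)|]; lia.
  - intros Hq. apply andb_prop in Hq as [Hz Hl].
    apply Nat.eqb_eq in Hz. apply Nat.leb_le in Hl.
    pose proof (Hterm 0 HK Hz). pose proof (sum_nat_term_le _ excess 0 HK). lia.
Qed.

Lemma tree_lower_bound n k l (x y : nat -> nat) : 2 <= m ->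
  (forall i, i < Nat.pow m (k + l) * Nat.pow m n -> y i <= x i) ->
  let M := Nat.pow m n in
  let qual t := andb (rec_val m n (blk M t y) =? k) (l <=? open_weight n (blk M t x) (blk M t y)) in
  sum_nat (Nat.pow m (k + l))
    (fun t => if rec_val m n (blk M t y) =? k then open_weight n (blk M t x) (blk M t y) - l else 0)
  + pair_bonus l (fun s => qual (s * Nat.pow m k))
  <= rec_val m (n + k + l) x.
Proof.
  intros Hm2 Hxy M qual. set (K := Nat.pow m k).
  set (z := fun t => rec_val m n (blk M t y)).
  set (W := fun t => open_weight n (blk M t x) (blk M t y)).
  set (u := fun t => rec_val m n (blk M t x)).
  set (v := fun s => rec_val m k (blk K s u)).
  assert (Ekl : Nat.pow m (k + l) = Nat.pow m l * K) by (unfold K; rewrite <- Nat.pow_add_r; f_equal; lia).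
  assert (HzW : forall t, t < Nat.pow m (k + l) -> z t + W t <= u t).
  { intros t Ht. apply rec_val_ge_open_weight. intros i Hi. apply Hxy. unfold M in *. nia. }
  assert (Hstep : forall s, s < Nat.pow m l ->
    sum_nat K (fun t => if z (s * K + t) =? k then W (s * K + t) - l else 0) <= v s - l
    /\ (qual (s * K) = true -> l <= v s)).
  { intros s Hs. pose proof (pow_m_pos k) as HK.
    destruct (excess_after_k k l (blk K s z) (blk K s u) (blk K s W)) as [H1 H2].
    { intros t Ht. apply HzW. rewrite Ekl. fold K in Ht. nia. }
    split; [exact H1|]. intros Hq. apply H2. unfold blk. rewrite Nat.add_0_r. exact Hq. }
  replace (n + k + l) with ((l + k) + n) by lia.
  rewrite rec_val_compose. fold M u. rewrite rec_val_compose. fold K v.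
  pose proof (rec_val_ge_sum_minus_bonus l v Hm2) as Hlose.
  assert (Hsum : sum_nat (Nat.pow m (k + l)) (fun t => if z t =? k then W t - l else 0)
                 <= sum_nat (Nat.pow m l) (fun s => v s - l)).
  { rewrite Ekl, sum_nat_blocks. apply sum_nat_le. intros s Hs. apply Hstep; auto. }
  assert (Hbonus : pair_bonus l (fun s => qual (s * K)) <= pair_bonus l (fun s => l <=? v s)).
  { destruct l as [|l']; [simpl; lia|]. pose proof (pow_m_pos l').
    unfold pair_bonus.
    destruct (qual (0 * K)) eqn:E0, (qual (Nat.pow m l' * K)) eqn:E1; try (simpl; lia).
    apply (proj2 (Hstep 0 ltac:(simpl; nia))), Nat.leb_le in E0.
    apply (proj2 (Hstep (Nat.pow m l') ltac:(simpl; nia))), Nat.leb_le in E1.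
    rewrite E0, E1. simpl. lia. }
  unfold z, W in Hsum. lia.
Qed.

End TreeBounds.

(** * Truncation levels for a probability mass function *)

Open Scope R_scope.

Lemma INR_sum_nat n g : INR (sum_nat n g) = sum_R n (fun i => INR (g i)).
Proof. induction n as [|n IH]; simpl; auto. rewrite plus_INR, IH. auto. Qed.

Lemma INR_if (b : bool) : INR (if b then 1%nat else 0%nat) = indic b.
Proof. destruct b; reflexivity. Qed.

Lemma indic_andb a b : indic (andb a b) = indic a * indic b.
Proof. destruct a, b; simpl; lra. Qed.

Lemma indic_nonneg b : 0 <= indic b.
Proof. destruct b; simpl; lra. Qed.

Lemma pow_ge_bernoulli s n : 0 <= s -> 1 + INR n * (s - 1) <= s ^ n.
Proof.
  intros Hs. induction n as [|n IH]; [simpl; lra|]. rewrite S_INR. simpl.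
  assert (s * (1 + INR n * (s - 1)) <= s * s ^ n) by (apply Rmult_le_compat_l; auto).
  pose proof (pos_INR n).
  assert (0 <= INR n * ((s - 1) * (s - 1))) by (apply Rmult_le_pos; [apply pos_INR|apply Rle_0_sqr]).
  nra.
Qed.

Lemma pow_le_1 x j : 0 <= x <= 1 -> x ^ j <= 1.
Proof. intros H. induction j; simpl; [lra|]. assert (0 <= x ^ j) by (apply pow_le; lra). nra. Qed.

Section Levels.
Variable q : nat -> nat -> R.
Hypothesis q_nonneg : forall a b, 0 <= q a b.
Hypothesis q_total : Un_cv (fun K => sum_R K (fun a => sum_R K (fun b => q a b))) 1.

Definition zero_mass K := texp q K 1 (fun w => indic (Nat.eqb (snd (w O)) O)).

Lemma mass_tends_1 eps : 0 < eps -> exists K0, forall K, (K0 <= K)%nat -> Rabs (mass q K - 1) < eps.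
Proof.
  intros He. destruct (q_total eps He) as [K0 HK0]. exists K0. intros K HK.
  specialize (HK0 K HK). unfold R_dist in HK0. unfold mass. rewrite (texp1 q K (fun _ => 1)).
  rewrite (sum_R_ext _ _ (fun a => sum_R K (fun b => q a b))); auto.
  intros; apply sum_R_ext; intros; ring.
Qed.

Lemma mass_le_1 K : mass q K <= 1.
Proof.
  destruct (Rle_dec (mass q K) 1) as [H|H]; auto. exfalso.
  destruct (mass_tends_1 (mass q K - 1)) as [K0 HK0]; [lra|].
  specialize (HK0 (Nat.max K0 K) ltac:(lia)). pose proof (mass_mono q q_nonneg K (Nat.max K0 K) ltac:(lia)).
  apply Rabs_def2 in HK0. lra.
Qed.

Lemma zero_mass_mono K K' : (K <= K')%nat -> zero_mass K <= zero_mass K'.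
Proof. intros; apply texp_level_mono; auto; intros; apply indic_nonneg. Qed.

Lemma zero_mass_le_mass K : zero_mass K <= mass q K.
Proof. apply texp_mono; auto. intros; unfold indic; destruct (_ =? _)%nat; lra. Qed.

Lemma pos_mass_mono K K' : (K <= K')%nat -> mass q K - zero_mass K <= mass q K' - zero_mass K'.
Proof.
  intros HK. unfold mass, zero_mass. rewrite <- !texp_minus.
  apply texp_level_mono; auto. intros; unfold indic; destruct (_ =? _)%nat; lra.
Qed.

Lemma mass_pow_near_1 P eps : 0 < eps ->
  exists K0, forall K, (K0 <= K)%nat -> 1 - INR P * eps <= mass q K ^ P.
Proof.
  intros He. destruct (mass_tends_1 eps He) as [K0 HK0]. exists K0. intros K HK.
  pose proof (HK0 K HK) as H. apply Rabs_def2 in H.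
  pose proof (pow_ge_bernoulli (mass q K) P (mass_nonneg q q_nonneg K)).
  assert (INR P * (mass q K - 1) >= - INR P * eps) by (pose proof (pos_INR P); nra). lra.
Qed.

Lemma zero_mass_near_limit eps : 0 < eps ->
  exists K0, forall K2 K', (K0 <= K2)%nat -> (K2 <= K')%nat -> zero_mass K' - zero_mass K2 <= eps.
Proof.
  intros He. destruct (mass_tends_1 eps He) as [K0 HK0]. exists K0. intros K2 K' H2 H'.
  pose proof (HK0 K2 H2) as H. apply Rabs_def2 in H.
  pose proof (mass_le_1 K'). pose proof (pos_mass_mono K2 K' H'). lra.
Qed.

Lemma truncation_loss_small P Kp theta : 0 < zero_mass Kp -> 0 <= theta < 1 ->
  exists K2, (Kp <= K2)%nat /\
  forall K', (K2 <= K')%nat -> theta <= mass q K' ^ P * (zero_mass K2 / zero_mass K').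
Proof.
  intros Hp Hth. remember (zero_mass Kp) as p0 eqn:Ep.
  (* eps with (1 - P eps)(1 - eps/p0) >= theta *)
  set (eps := (1 - theta) / (INR P + / p0 + 1)).
  assert (Hinv : 0 < / p0) by (apply Rinv_0_lt_compat; auto).
  assert (He : 0 < eps) by (apply Rdiv_lt_0_compat; [lra|pose proof (pos_INR P); lra]).
  assert (He2 : eps * (INR P + / p0 + 1) = 1 - theta)
    by (unfold eps, Rdiv; rewrite Rmult_assoc, Rinv_l by (pose proof (pos_INR P); lra); ring).
  destruct (mass_pow_near_1 P eps He) as [K0 HK0].
  destruct (zero_mass_near_limit eps He) as [K1 HK1].
  exists (Nat.max (Nat.max K0 K1) Kp). split; [lia|]. intros K' HK'.
  set (K2 := Nat.max (Nat.max K0 K1) Kp) in *.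
  pose proof (HK0 K' ltac:(lia)) as Hpow. pose proof (HK1 K2 K' ltac:(lia) HK') as Hdiff.
  assert (P2 : p0 <= zero_mass K2) by (rewrite Ep; apply zero_mass_mono; lia).
  assert (P2' : zero_mass K2 <= zero_mass K') by (apply zero_mass_mono; lia).
  assert (Hratio : 1 - eps / p0 <= zero_mass K2 / zero_mass K').
  { apply (Rmult_le_reg_r (zero_mass K')); [lra|].
    unfold Rdiv. rewrite Rmult_assoc, Rinv_l by lra.
    assert (/ p0 * zero_mass K' >= 1).
    { apply Rle_ge, (Rmult_le_reg_l p0); auto. rewrite <- Rmult_assoc, Rinv_r by lra. lra. }
    nra. }
  assert (Hs1 : INR P * eps <= 1 - theta) by (assert (eps * / p0 >= 0) by nra; nra).
  assert (Hs2 : eps / p0 <= 1 - theta) by (unfold Rdiv; pose proof (pos_INR P); nra).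
  apply Rle_trans with ((1 - INR P * eps) * (1 - eps / p0)).
  - assert (0 <= eps * (INR P * (eps / p0))).
    { apply Rmult_le_pos; [lra|]. apply Rmult_le_pos; [apply pos_INR|].
      unfold Rdiv. apply Rmult_le_pos; lra. }
    unfold Rdiv in *. nra.
  - apply Rmult_le_compat; lra.
Qed.

End Levels.

(** * The estimate at the vertex e_{n+k+l} *)

Section Estimate.
Variable m : nat.
Hypothesis m_ge2 : (2 <= m)%nat.
Variable q : nat -> nat -> R.
Hypothesis q_nonneg : forall a b, 0 <= q a b.
Hypothesis q_coupling : XY_coupling q.
Variables (eta r : R) (n k l : nat).
Hypothesis eta_pos : 0 < eta.
Hypothesis l_le : INR l <= r * eta / 2.

Let m_pos : (0 < m)%nat.
Proof. lia. Qed.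

(* Functionals of a sample u of the m^n leaves of e_n: Y_n, N_n^{(0)}, W_n,
   the indicator of A = {N_n >= r, Y_n = k} and the quantities built on them. *)
Definition Y_top (u : nat -> nat * nat) : nat := rec_val m n (fun i => snd (u i)).
Definition N_top (u : nat -> nat * nat) : nat := open_count m n (fun i => snd (u i)).
Definition W_top (u : nat -> nat * nat) : nat := open_weight m n (fun i => fst (u i)) (fun i => snd (u i)).
Definition ind_A (u : nat -> nat * nat) : R :=
  indic (if Rle_dec r (INR (N_top u)) then true else false) * indic (Nat.eqb (Y_top u) k).
Definition N_on_A (u : nat -> nat * nat) : R := INR (N_top u) * ind_A u.
(* Contribution of e_n to X_{n+k+l} in the pointwise bound, restricted to A. *)
Definition gain (u : nat -> nat * nat) : R := ind_A u * (INR (W_top u) - INR l).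
(* e_n can pay for the pair bonus: Y_n = k and W_n >= l. *)
Definition qualifies (u : nat -> nat * nat) : bool := andb (Nat.eqb (Y_top u) k) (Nat.leb l (W_top u)).

(* What the loss of l per summand costs relative to N_n: nothing for l = 0,
   and at most eta/2 otherwise since l <= r eta/2 <= N_n eta/2 on A. *)
Definition loss_rate : R := match l with O => 0 | S _ => eta / 2 end.

Lemma ind_A_cases u : ind_A u = 0 \/ (ind_A u = 1 /\ r <= INR (N_top u) /\ Y_top u = k).
Proof.
  unfold ind_A. destruct (Rle_dec r (INR (N_top u))); simpl; [|left; ring].
  destruct (Nat.eqb_spec (Y_top u) k); simpl; [right; repeat split; auto; ring|left; ring].
Qed.

Lemma ind_A_nonneg u : 0 <= ind_A u.
Proof. destruct (ind_A_cases u) as [E|[E _]]; rewrite E; lra. Qed.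

Lemma N_on_A_nonneg u : 0 <= N_on_A u.
Proof. apply Rmult_le_pos; [apply pos_INR|apply ind_A_nonneg]. Qed.

Lemma leaf_functionals_local u u' : (forall j, (j < Nat.pow m n)%nat -> u j = u' j) ->
  Y_top u = Y_top u' /\ N_top u = N_top u' /\ W_top u = W_top u'.
Proof.
  intros H. unfold Y_top, N_top, W_top, open_weight. repeat split.
  - apply rec_val_ext; auto. intros s Hs. rewrite H; auto.
  - apply open_count_ext; auto. intros s Hs. rewrite H; auto.
  - apply sum_nat_ext. intros i Hi. rewrite H by auto. f_equal.
    apply open_from_ext; auto. intros s Hs. rewrite H; auto.
Qed.

Lemma gain_local : loc (Nat.pow m n) gain.
Proof.
  intros u u' H. destruct (leaf_functionals_local u u' H) as (EY & EN & EW).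
  unfold gain, ind_A. rewrite EY, EN, EW. reflexivity.
Qed.

Lemma qualifies_local : loc (Nat.pow m n) (fun u => indic (qualifies u)).
Proof.
  intros u u' H. destruct (leaf_functionals_local u u' H) as (EY & EN & EW).
  unfold qualifies. rewrite EY, EW. reflexivity.
Qed.

(* The sample of the m^n leaves below the ancestor t (in generation n) of e_{n+k+l}. *)
Definition subsample (t : nat) (w : nat -> nat * nat) : nat -> nat * nat :=
  fun j => w (t * Nat.pow m n + j)%nat.

Definition bonus (w : nat -> nat * nat) : R :=
  INR (pair_bonus m l (fun s => qualifies (subsample (s * Nat.pow m k) w))).

(* Step (1) in real numbers, on samples of positive weight (where Y <= X). *)
Lemma pointwise_bound w :
  (forall i, (i < Nat.pow m (n + k + l))%nat -> 0 < q (fst (w i)) (snd (w i))) ->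
  sum_R (Nat.pow m (k + l)) (fun t => gain (subsample t w)) + bonus w
  <= INR (rec_val m (n + k + l) (fun i => fst (w i))).
Proof.
  intros Hsupp.
  assert (Hxy : forall i, (i < Nat.pow m (k + l) * Nat.pow m n)%nat -> (snd (w i) <= fst (w i))%nat).
  { intros i Hi. rewrite <- Nat.pow_add_r, Nat.add_comm, Nat.add_assoc in Hi.
    apply (q_coupling _ _ (Hsupp i Hi)). }
  pose proof (tree_lower_bound m m_pos n k l (fun i => fst (w i)) (fun i => snd (w i)) m_ge2 Hxy) as T.
  cbv zeta in T. apply le_INR in T. rewrite plus_INR, INR_sum_nat in T.
  eapply Rle_trans; [|exact T]. apply Rplus_le_compat; [|apply Rle_refl].
  apply sum_R_le. intros t Ht. unfold gain.
  destruct (ind_A_cases (subsample t w)) as [E|(E & _ & EY)]; rewrite E.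
  - rewrite Rmult_0_l. apply pos_INR.
  - unfold blk.
    change (rec_val m n (fun s => snd (w (t * Nat.pow m n + s)%nat))) with (Y_top (subsample t w)).
    change (open_weight m n (fun s => fst (w (t * Nat.pow m n + s)%nat))
              (fun s => snd (w (t * Nat.pow m n + s)%nat))) with (W_top (subsample t w)).
    rewrite EY, Nat.eqb_refl.
    destruct (le_lt_dec l (W_top (subsample t w))) as [Hl|Hl].
    + rewrite minus_INR by auto. lra.
    + pose proof (pos_INR (W_top (subsample t w) - l)). pose proof (lt_INR _ _ Hl). lra.
Qed.

(* Step (2): the m^(k+l) subsamples are disjoint blocks of i.i.d. leaves. *)
Lemma expected_tree_bound K' :
  INR m ^ (k + l) * mass q K' ^ (Nat.pow m (n + k + l) - Nat.pow m n) * texp q K' (Nat.pow m n) gain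
  + texp q K' (Nat.pow m (n + k + l)) bonus
  <= texp q K' (Nat.pow m (n + k + l)) (fun w => INR (rec_val m (n + k + l) (fun i => fst (w i)))).
Proof.
  eapply Rle_trans; [|apply (texp_mono_supp q q_nonneg) with
    (f := fun w => sum_R (Nat.pow m (k + l)) (fun t => gain (subsample t w)) + bonus w);
    intros; apply pointwise_bound; auto].
  rewrite texp_plus, texp_sum. apply Rplus_le_compat_r.
  assert (E : Nat.pow m (n + k + l) = (Nat.pow m (k + l) * Nat.pow m n)%nat)
    by (rewrite <- Nat.pow_add_r; f_equal; lia).
  rewrite (sum_R_ext _ _ (fun _ => mass q K' ^ (Nat.pow m (n + k + l) - Nat.pow m n)
                                   * texp q K' (Nat.pow m n) gain)).
  - rewrite sum_R_const, pow_INR. lra.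
  - intros t Ht. apply texp_block; [rewrite E; nia|apply gain_local].
Qed.

(* For l >= 1 the expected pair bonus is positive as soon as qualifying
   subsamples have positive weight: the two blocks are independent. *)
Lemma bonus_expectation_pos K' : (1 <= l)%nat ->
  0 < texp q K' (Nat.pow m n) (fun u => indic (qualifies u)) ->
  0 < texp q K' (Nat.pow m (n + k + l)) bonus.
Proof.
  intros Hl Hd. pose proof (pow_m_pos m m_pos n) as HM. set (M := Nat.pow m n) in *.
  assert (Hmass : 0 < mass q K').
  { destruct (mass_nonneg q q_nonneg K') as [Hpos|Hzero]; auto. exfalso.
    assert (Hle : texp q K' M (fun u => indic (qualifies u)) <= texp q K' M (fun _ => 1))
      by (apply texp_mono; auto; intros w; unfold indic; destruct (qualifies w); lra).
    rewrite texp_const, <- Hzero, pow_i in Hle by lia. lra. }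
  unfold bonus. destruct l as [|l']; [lia|]. clear Hl.
  set (s1 := (0 * Nat.pow m k * M)%nat). set (s2 := (Nat.pow m l' * Nat.pow m k * M)%nat).
  rewrite (texp_ext _ _ _ _ (fun w => indic (qualifies (fun j => w (s1 + j)%nat))
                                   * indic (qualifies (fun j => w (s2 + j)%nat)))).
  2:{ intros w. unfold pair_bonus. rewrite INR_if, indic_andb. reflexivity. }
  pose proof (pow_m_pos m m_pos l'). pose proof (pow_m_pos m m_pos k).
  assert (Hs12 : (s1 + M <= s2)%nat).
  { assert (1 <= Nat.pow m l' * Nat.pow m k)%nat by nia. unfold s1, s2. nia. }
  assert (Hs2 : (s2 + M <= Nat.pow m (n + k + S l'))%nat).
  { assert (E : Nat.pow m (n + k + S l') = (m * s2)%nat)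
      by (unfold s2, M; rewrite !Nat.pow_add_r; simpl; ring).
    rewrite E. unfold s1 in Hs12. nia. }
  pose proof (texp_block2 q K' _ M M s1 s2 (fun u => indic (qualifies u)) (fun u => indic (qualifies u))
                Hs12 Hs2 qualifies_local qualifies_local) as Hblocks.
  cbv beta in Hblocks. rewrite Hblocks.
  apply Rmult_lt_0_compat; [apply Rmult_lt_0_compat|]; auto. apply pow_lt; auto.
Qed.

(* Step (3).  A leaf with Y = 0 contributes to N_n and W_n through the event
   "its path is open and A holds", which ignores the leaf itself. *)
Definition leaf_factor (i : nat) (w : nat -> nat * nat) : R :=
  INR (open_from m n (fun s => snd (w s)) i) * ind_A w.

Lemma leaf_factor_ignores_leaf i w :
  snd (w i) = O -> leaf_factor i (upd i (0, 0)%nat w) = leaf_factor i w.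
Proof.
  intros H.
  assert (E : (fun j => snd (upd i (0, 0)%nat w j)) = (fun j => snd (w j))).
  { apply functional_extensionality; intros j. unfold upd.
    destruct (Nat.eqb_spec j i); subst; simpl; auto. }
  unfold leaf_factor, ind_A, N_top, Y_top. rewrite E. reflexivity.
Qed.

Lemma leaf_decomposition (h : nat * nat -> R) (c : nat -> R) w :
  (forall p, snd p <> O -> h p = 0) ->
  (forall i, snd (w i) = O -> h (w i) = c i) ->
  sum_R (Nat.pow m n) (fun i => c i * leaf_factor i w)
  = sum_R (Nat.pow m n) (fun i => h (w i) * leaf_factor i (upd i (0, 0)%nat w)).
Proof.
  intros Hh Hc. apply sum_R_ext. intros i Hi.
  destruct (Nat.eqb_spec (snd (w i)) 0) as [E|E].
  - rewrite leaf_factor_ignores_leaf, Hc by auto. reflexivity.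
  - unfold leaf_factor. rewrite open_from_nonzero_leaf, Hh by auto. simpl. ring.
Qed.

Lemma W_on_A_decomposition w : ind_A w * INR (W_top w) =
  sum_R (Nat.pow m n) (fun i => (INR (fst (w i)) * indic (Nat.eqb (snd (w i)) O))
                                * leaf_factor i (upd i (0, 0)%nat w)).
Proof.
  rewrite <- (leaf_decomposition (fun p => INR (fst p) * indic (Nat.eqb (snd p) O))
                                 (fun i => INR (fst (w i)))).
  - unfold W_top, open_weight. rewrite INR_sum_nat, <- sum_R_scal.
    apply sum_R_ext. intros i Hi. unfold leaf_factor. rewrite mult_INR. ring.
  - intros p Hp. destruct (Nat.eqb_spec (snd p) 0); [lia|]. simpl. ring.
  - intros i Hi. rewrite Hi. simpl. ring.
Qed.

Lemma N_on_A_decomposition w : N_on_A w =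
  sum_R (Nat.pow m n) (fun i => indic (Nat.eqb (snd (w i)) O) * leaf_factor i (upd i (0, 0)%nat w)).
Proof.
  rewrite <- (leaf_decomposition (fun p => indic (Nat.eqb (snd p) O)) (fun _ => 1)).
  - unfold N_on_A, N_top. rewrite (open_count_sum m m_pos), INR_sum_nat, Rmult_comm, <- sum_R_scal.
    apply sum_R_ext. intros i Hi. unfold leaf_factor. ring.
  - intros p Hp. destruct (Nat.eqb_spec (snd p) 0); [lia|]. reflexivity.
  - intros i Hi. rewrite Hi. reflexivity.
Qed.

Lemma coupling_difference K :
  texp q K 1 (fun w => INR (fst (w O) - snd (w O)))
  = texp q K 1 (fun w => INR (fst (w O)) * indic (Nat.eqb (snd (w O)) O)).
Proof.
  rewrite (texp1 q K (fun p => INR (fst p - snd p))).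
  rewrite (texp1 q K (fun p => INR (fst p) * indic (Nat.eqb (snd p) O))).
  apply sum_R_ext; intros a _; apply sum_R_ext; intros b _. simpl.
  destruct (q_nonneg a b) as [Hq|Hq]; [|rewrite <- Hq; ring].
  destruct (q_coupling a b Hq) as [_ Hab]. unfold indic.
  destruct (Nat.eqb_spec b 0) as [->|Hb].
  - rewrite Nat.sub_0_r. ring.
  - rewrite Hab, Nat.sub_diag by lia. simpl. ring.
Qed.

Lemma weight_identity K' : 0 < mass q K' ->
  zero_mass q K' * texp q K' (Nat.pow m n) (fun u => ind_A u * INR (W_top u)) =
  texp q K' 1 (fun w => INR (fst (w O) - snd (w O))) * texp q K' (Nat.pow m n) N_on_A.
Proof.
  intros Hmass. rewrite coupling_difference.
  rewrite (texp_ext _ _ _ _ _ W_on_A_decomposition), (texp_ext _ _ _ _ _ N_on_A_decomposition).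
  rewrite !texp_sum, <- !sum_R_scal. apply sum_R_ext. intros i Hi.
  assert (Hinv : forall w p, leaf_factor i (upd i (0, 0)%nat (upd i p w)) = leaf_factor i (upd i (0, 0)%nat w))
    by (intros; rewrite upd_upd_same; reflexivity).
  pose proof (texp_indep_coord q K' _ i (fun p => INR (fst p) * indic (Nat.eqb (snd p) O)) _ Hi Hinv) as H1.
  pose proof (texp_indep_coord q K' _ i (fun p => indic (Nat.eqb (snd p) O)) _ Hi Hinv) as H0.
  apply Rmult_eq_reg_r with (mass q K'); [|lra].
  cbv beta in H0, H1.
  match type of H1 with ?A * _ = _ => set (TA := A) in * end.
  match type of H0 with ?B * _ = _ => set (TB := B) in * end.
  transitivity (zero_mass q K' * (TA * mass q K')); [ring|]. rewrite H1.
  transitivity (texp q K' 1 (fun w => INR (fst (w O)) * indic (Nat.eqb (snd (w O)) O)) * (TB * mass q K'));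
    [|ring]. rewrite H0. unfold zero_mass. ring.
Qed.

Lemma loss_rate_cases : (l = O /\ loss_rate = 0) \/ ((1 <= l)%nat /\ loss_rate = eta / 2).
Proof. unfold loss_rate. destruct l; [left|right]; split; auto; lia. Qed.

(* Step (4), pointwise on A: l <= loss_rate * N_n. *)
Lemma gain_ge_weight K' :
  texp q K' (Nat.pow m n) (fun u => ind_A u * INR (W_top u)) - loss_rate * texp q K' (Nat.pow m n) N_on_A
  <= texp q K' (Nat.pow m n) gain.
Proof.
  rewrite <- texp_scal, <- texp_minus. apply texp_mono; auto. intros u. unfold gain, N_on_A.
  destruct (ind_A_cases u) as [E|(E & HN & _)]; rewrite E; [lra|].
  destruct loss_rate_cases as [[-> ->]|[_ ->]]; simpl; nra.
Qed.

Lemma qualifies_of_gain K' :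
  0 < texp q K' (Nat.pow m n) gain -> 0 < texp q K' (Nat.pow m n) (fun u => indic (qualifies u)).
Proof.
  intros H. apply (texp_pos q q_nonneg K' _ gain); auto; [|intros; apply indic_nonneg].
  intros u Hu. unfold gain in Hu. destruct (ind_A_cases u) as [E|(E & _ & EY)]; rewrite E in Hu; [lra|].
  unfold qualifies. rewrite EY, Nat.eqb_refl.
  destruct (Nat.leb_spec l (W_top u)) as [_|Hlt]; simpl; [lra|]. apply lt_INR in Hlt. lra.
Qed.

(* From here on: q is a probability, P(Y_0 = 0) > 0 and E(X_0 - Y_0) >= eta P(Y_0 = 0). *)
Hypothesis q_total : Un_cv (fun K => sum_R K (fun a => sum_R K (fun b => q a b))) 1.
Variable Kp : nat.
Hypothesis zero_mass_pos : 0 < zero_mass q Kp.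
Hypothesis drift : forall K2, exists K1,
  eta * zero_mass q K2 <= texp q K1 1 (fun w => INR (fst (w O) - snd (w O))).

Definition other_leaves : nat := (Nat.pow m (n + k + l) - Nat.pow m n)%nat.

Lemma weight_ge theta : 0 <= theta < 1 -> exists K2, forall K', (K2 <= K')%nat ->
  theta * eta * texp q K' (Nat.pow m n) N_on_A
  <= mass q K' ^ other_leaves * texp q K' (Nat.pow m n) (fun u => ind_A u * INR (W_top u)).
Proof.
  intros Hth.
  destruct (truncation_loss_small q q_nonneg q_total other_leaves Kp theta zero_mass_pos Hth)
    as [K2 [HK2 Hloss]].
  destruct (drift K2) as [K1 HK1]. exists (Nat.max K2 K1). intros K' HK'.
  set (E' := texp q K' (Nat.pow m n) N_on_A). set (T := texp q K' (Nat.pow m n) (fun u => ind_A u * INR (W_top u))).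
  set (S1 := mass q K' ^ other_leaves).
  assert (HZ2 : 0 < zero_mass q K2) by (pose proof (zero_mass_mono q q_nonneg Kp K2 HK2); lra).
  assert (HZ' : zero_mass q K2 <= zero_mass q K') by (apply zero_mass_mono; auto; lia).
  assert (Hmass : 0 < mass q K') by (pose proof (zero_mass_le_mass q q_nonneg K'); lra).
  assert (HE' : 0 <= E') by (apply texp_nonneg; auto; apply N_on_A_nonneg).
  assert (HS1 : 0 <= S1) by (apply pow_le, mass_nonneg; auto).
  assert (Hdrift : eta * zero_mass q K2 <= texp q K' 1 (fun w => INR (fst (w O) - snd (w O)))).
  { eapply Rle_trans; [exact HK1|]. apply texp_level_mono; auto; [lia|intros; apply pos_INR]. }
  pose proof (weight_identity K' Hmass) as Hid. fold T E' in Hid.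
  (* eta * (Z2 / Z') * E' <= T, then multiply by S1 and use theta <= S1 * Z2 / Z' *)
  assert (HT : eta * (zero_mass q K2 / zero_mass q K') * E' <= T).
  { apply (Rmult_le_reg_l (zero_mass q K')); [lra|]. rewrite Hid.
    replace (zero_mass q K' * (eta * (zero_mass q K2 / zero_mass q K') * E'))
      with (eta * zero_mass q K2 * E') by (field; lra).
    apply Rmult_le_compat_r; auto. }
  pose proof (Hloss K' ltac:(lia)) as Hth'. fold S1 in Hth'.
  apply Rle_trans with (S1 * (eta * (zero_mass q K2 / zero_mass q K') * E')).
  - replace (S1 * (eta * (zero_mass q K2 / zero_mass q K') * E'))
      with ((S1 * (zero_mass q K2 / zero_mass q K')) * (eta * E')) by ring.
    replace (theta * eta * E') with (theta * (eta * E')) by ring.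
    apply Rmult_le_compat_r; [apply Rmult_le_pos|]; lra.
  - apply Rmult_le_compat_l; auto.
Qed.

Lemma gain_estimate theta K : 1 / 2 <= theta < 1 -> exists K2, forall K', (K2 <= K')%nat -> (K <= K')%nat ->
  (theta * eta - loss_rate) * texp q K (Nat.pow m n) N_on_A
  <= mass q K' ^ other_leaves * texp q K' (Nat.pow m n) gain.
Proof.
  intros Hth. destruct (weight_ge theta ltac:(lra)) as [K2 HK2]. exists K2. intros K' HK2' HK.
  pose proof (HK2 K' HK2') as Hw. pose proof (gain_ge_weight K') as Hg.
  set (E := texp q K (Nat.pow m n) N_on_A) in *. set (E' := texp q K' (Nat.pow m n) N_on_A) in *.
  set (S1 := mass q K' ^ other_leaves) in *.
  assert (HEE' : E <= E') by (apply texp_level_mono; auto; apply N_on_A_nonneg).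
  assert (HE : 0 <= E) by (apply texp_nonneg; auto; apply N_on_A_nonneg).
  assert (HS1 : 0 <= S1 <= 1)
    by (split; [apply pow_le, mass_nonneg; auto|apply pow_le_1; split; [apply mass_nonneg|apply mass_le_1]; auto]).
  assert (Hloss : 0 <= loss_rate <= theta * eta) by (destruct loss_rate_cases as [[_ ->]|[_ ->]]; nra).
  (* (theta eta - loss) E <= theta eta E' - loss E' <= S1 T - S1 loss E' <= S1 G *)
  apply Rle_trans with (theta * eta * E' - loss_rate * E').
  { assert (0 <= (theta * eta - loss_rate) * (E' - E)) by (apply Rmult_le_pos; lra). lra. }
  apply Rle_trans with (S1 * (texp q K' (Nat.pow m n) (fun u => ind_A u * INR (W_top u)) - loss_rate * E')).
  { assert (S1 * (loss_rate * E') <= 1 * (loss_rate * E'))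
      by (apply Rmult_le_compat_r; [apply Rmult_le_pos|]; lra).
    lra. }
  apply Rmult_le_compat_l; lra.
Qed.

Definition rhs (K' : nat) : R :=
  texp q K' (Nat.pow m (n + k + l)) (fun w => INR (rec_val m (n + k + l) (fun i => fst (w i)))).

Lemma bonus_nonneg w : 0 <= bonus w.
Proof. apply pos_INR. Qed.

Lemma estimate_up_to_theta theta K : 1 / 2 <= theta < 1 -> exists K2, forall K', (K2 <= K')%nat -> (K <= K')%nat ->
  INR m ^ (k + l) * ((theta * eta - loss_rate) * texp q K (Nat.pow m n) N_on_A)
  + texp q K' (Nat.pow m (n + k + l)) bonus <= rhs K'.
Proof.
  intros Hth. destruct (gain_estimate theta K Hth) as [K2 HK2]. exists K2. intros K' H2 HK.
  eapply Rle_trans; [|apply expected_tree_bound]. apply Rplus_le_compat_r.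
  rewrite Rmult_assoc. apply Rmult_le_compat_l; [apply pow_le, pos_INR|]. apply HK2; auto.
Qed.

(* For l = 0 no loss is paid and the factor theta = 1/2 suffices. *)
Lemma estimate_l_zero K : l = O -> exists K',
  INR m ^ (k + l) * eta / 2 * texp q K (Nat.pow m n) N_on_A <= rhs K'.
Proof.
  intros Hl. destruct (estimate_up_to_theta (1 / 2) K ltac:(lra)) as [K2 HK2].
  exists (Nat.max K2 K). pose proof (HK2 (Nat.max K2 K) ltac:(lia) ltac:(lia)) as H.
  destruct loss_rate_cases as [[_ Hloss]|[Hl' _]]; [|lia]. rewrite Hloss in H.
  assert (0 <= texp q (Nat.max K2 K) (Nat.pow m (n + k + l)) bonus) by (apply texp_nonneg; auto; apply bonus_nonneg).
  assert (INR m ^ (k + l) * eta / 2 * texp q K (Nat.pow m n) N_on_A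
          = INR m ^ (k + l) * ((1 / 2 * eta - 0) * texp q K (Nat.pow m n) N_on_A)) by field.
  lra.
Qed.

(* For l >= 1 the expected pair bonus beta > 0 compensates the truncation
   loss: choose theta with (1 - theta) m^(k+l) eta E <= beta. *)
Lemma estimate_l_pos K : (1 <= l)%nat -> exists K',
  INR m ^ (k + l) * eta / 2 * texp q K (Nat.pow m n) N_on_A <= rhs K'.
Proof.
  intros Hl. set (E := texp q K (Nat.pow m n) N_on_A). set (Bm := INR m ^ (k + l)).
  assert (HBm : 0 < Bm) by (apply pow_lt; apply lt_0_INR; lia).
  assert (Hloss : loss_rate = eta / 2) by (destruct loss_rate_cases as [[? _]|[_ ?]]; auto; lia).
  destruct (Rle_lt_dec E 0) as [HE0|HE].
  { exists K. assert (0 <= rhs K) by (apply texp_nonneg; auto; intros; apply pos_INR).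
    assert (E = 0) as -> by (apply Rle_antisym; auto; apply texp_nonneg; auto; apply N_on_A_nonneg).
    lra. }
  destruct (gain_estimate (3 / 4) K ltac:(lra)) as [K2a HK2a]. set (K3 := Nat.max K2a K).
  assert (Hbeta : 0 < texp q K3 (Nat.pow m (n + k + l)) bonus).
  { apply bonus_expectation_pos, qualifies_of_gain; auto.
    pose proof (HK2a K3 ltac:(lia) ltac:(lia)) as H. rewrite Hloss in H. fold E in H.
    assert (0 < mass q K3 ^ other_leaves * texp q K3 (Nat.pow m n) gain) by nra.
    destruct (Rle_lt_dec (texp q K3 (Nat.pow m n) gain) 0); auto.
    pose proof (pow_le _ other_leaves (mass_nonneg q q_nonneg K3)). nra. }
  set (beta := texp q K3 (Nat.pow m (n + k + l)) bonus) in *.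
  set (X := Bm * eta * E). assert (HX : 0 < X) by (unfold X; repeat apply Rmult_lt_0_compat; lra).
  set (theta := 1 - beta / (X + 2 * beta)).
  assert (Hfrac : 0 < beta / (X + 2 * beta) <= 1 / 2).
  { split; [apply Rdiv_lt_0_compat; lra|].
    apply (Rmult_le_reg_r (X + 2 * beta)); [lra|]. unfold Rdiv. rewrite Rmult_assoc, Rinv_l by lra. lra. }
  destruct (estimate_up_to_theta theta K ltac:(unfold theta; lra)) as [K2 HK2].
  set (K' := Nat.max K2 K3). exists K'.
  pose proof (HK2 K' ltac:(lia) ltac:(unfold K', K3; lia)) as H. rewrite Hloss in H. fold E in H.
  assert (Hmono : beta <= texp q K' (Nat.pow m (n + k + l)) bonus)
    by (apply texp_level_mono; auto; [lia|apply bonus_nonneg]).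
  assert (Hpay : X * (beta / (X + 2 * beta)) <= beta).
  { unfold Rdiv. rewrite <- Rmult_assoc. apply (Rmult_le_reg_r (X + 2 * beta)); [lra|].
    rewrite Rmult_assoc, Rinv_l by lra. nra. }
  assert (Hmain : Bm * ((theta * eta - eta / 2) * E) = X / 2 - X * (beta / (X + 2 * beta)))
    by (unfold theta, X in *; field; intro; lra).
  assert (Bm * eta / 2 * E = X / 2) by (unfold X; field).
  fold Bm in H. lra.
Qed.

Lemma truncated_estimate K : exists K',
  INR m ^ (k + l) * eta / 2 * texp q K (Nat.pow m n) N_on_A <= rhs K'.
Proof.
  destruct loss_rate_cases as [[Hl _]|[Hl _]]; [apply estimate_l_zero|apply estimate_l_pos]; auto.
Qed.

End Estimate.

Theorem theorem4p2 (m : nat) (q : nat -> nat -> R) (eta : R) :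
  (2 <= m)%nat ->
  is_pmf q ->
  XY_coupling q ->
  (* P(X0 = k) >= P(Y0 = k) for k >= 1 *)
  (forall k : nat, (1 <= k)%nat ->
     exp_le q 1 (fun w => indic (Nat.eqb (snd (w O)) k))
             1 (fun w => indic (Nat.eqb (fst (w O)) k))) ->
  (* P(Y0 = 0) > 0 *)
  (exists K, 0 < texp q K 1 (fun w => indic (Nat.eqb (snd (w O)) O))) ->
  0 < eta ->
  (* E(X0) < oo *)
  (exists M, forall K, texp q K 1 (fun w => INR (fst (w O))) <= M) ->
  (* E(X0 - Y0) >= eta P(Y0 = 0) *)
  exp_le q 1 (fun w => eta * indic (Nat.eqb (snd (w O)) O))
         1 (fun w => INR (fst (w O) - snd (w O))) ->
  forall (r : R) (n k l : nat),
    0 <= r -> INR l <= r * eta / 2 ->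
    exp_le q (Nat.pow m n)
      (fun w =>
         let N := open_count m n (fun i => snd (w i)) in
         (INR m ^ (k + l) * eta / 2) *
         (INR N * indic (if Rle_dec r (INR N) then true else false)
                * indic (Nat.eqb (rec_val m n (fun i => snd (w i))) k)))
      (Nat.pow m (n + k + l))
      (fun w => INR (rec_val m (n + k + l) (fun i => fst (w i)))).
Proof.
  intros Hm [q_nonneg q_total] Hcoup _ [Kp HKp] Heta _ Hdrift r n k l _ Hl K.
  assert (Hdrift' : forall K2, exists K1,
    eta * zero_mass q K2 <= texp q K1 1 (fun w => INR (fst (w O) - snd (w O)))).
  { intros K2. destruct (Hdrift K2) as [K1 HK1]. exists K1. unfold zero_mass. rewrite <- texp_scal. exact HK1. }
  destruct (truncated_estimate m Hm q q_nonneg Hcoup eta r n k l Heta Hl q_total Kp HKp Hdrift' K)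
    as [K' HK'].
  exists K'. eapply Rle_trans; [|exact HK'].
  right. rewrite <- texp_scal. apply texp_ext. intros w.
  unfold N_on_A, ind_A, N_top, Y_top. cbv zeta. ring.
Qed.
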